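(* No sequence $X\in\{\mathsf{T},\mathsf{S}\}^*$ is both transitive and minimal in $\{\mathsf{T},\mathsf{S}\}^*$.
   Context: Fix attribute–taxonomy pairs $A_1{:}T_1,\dots,A_d{:}T_d$ with distinct attribute names, where each taxonomy $T_i=(V_i,\le_{V_i})$ is a poset. A t-tuple over a t-schema $S\subseteq\{A_1{:}T_1,\dots,A_d{:}T_d\}$ maps each $A_i$ in $S$ to a value of $V_i$; $\mathcal{D}$ is the set of all t-tuples over all such t-schemas. A preference relation is a binary relation $\succeq$ on $\mathcal{D}$; its strict part is $t_1\succ t_2$ iff $t_1\succeq t_2$ and not $t_2\succeq t_1$. Preferences are given by a formula $F(x,y)=\bigvee_i P_i(x,y)$, a disjunction of statements; each statement $P_i$ is a disjunction of clauses, each clause a satisfiable conjunction of atoms of the forms $x[A_i]\le_{V_i} v$, $x[A_i]\not\le_{V_i} v$, $y[A_i]\le_{V_i} v$, $y[A_i]\not\le_{V_i} v$; the formula induces $t_1\succeq t_2\iff F(t_1,t_2)$. Operator $\mathsf{T}$ maps a formula to one inducing the transitive closure over $\mathcal{D}$ of the induced relation. Operator $\mathsf{S}$ (specificity-based refinement): repeat rounds; in a round, for each statement $P_i$ let $\mathrm{Impl}(P_i)$ be the set of statements $P_j$ such that $P_j(t_2,t_1)\Rightarrow P_i(t_1,t_2)$ for all $t_1,t_2\in\mathcal{D}$ but not conversely; simultaneously replace every $P_i$ with nonempty $\mathrm{Impl}(P_i)$ by $P_i(x,y)\wedge\bigwedge_{P_j\in \mathrm{Impl}(P_i)}\neg P_j(y,x)$;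 stop when no $\mathrm{Impl}$ set is nonempty. After each operator, contradictory clauses and subsumed statements are removed. For $X\in\{\mathsf{T},\mathsf{S}\}^*$, $\succeq_X$ (strict part $\succ_X$) is the relation induced by applying the operators of $X$ in order to the initial formula. Containment $X\sqsubseteq Y$ means $\succeq_X\subseteq\succeq_Y$ for every initial preference formula; $X\equiv Y$ means both containments. A sequence $X$ is transitive if $\succ_X$ is transitive for every initial preference formula. A sequence $X$ is minimal in a set $\Sigma$ if $X\in\Sigma$ and there is no $Y\in\Sigma$ with $Y\not\equiv X$ and $Y\sqsubseteq X$. *)

From mathcomp Require Import all_boot.
From Stdlib Require Import List.

Set Implicit Arguments.
Unset Strict Implicit.
Unset Printing Implicit Defensive.

(* Attribute A_i is represented by its index i : 'I_d.                 *)
Unset Implicit Arguments.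
Record Taxonomies := {
  tx_d : nat;
  tx_V : 'I_tx_d -> Type;
  tx_le : forall i, tx_V i -> tx_V i -> Prop;
  tx_refl : forall i (a : tx_V i), tx_le i a a;
  tx_trans : forall i (a b c : tx_V i), tx_le i a b -> tx_le i b c -> tx_le i a c;
  tx_antisym : forall i (a b : tx_V i), tx_le i a b -> tx_le i b a -> a = b
}.
Set Implicit Arguments.

(* A t-tuple over a t-schema S: attribute i is in S iff the entry is   *)
(* Some v.  The type of all such tuples (over all schemas) is D.       *)
Definition ttuple (tx : Taxonomies) : Type :=
  forall i : 'I_(tx_d tx), option (tx_V tx i).

Definition relD (D : Type) := D -> D -> Prop.

Inductive atom (tx : Taxonomies) : Type :=
  | XLe  (i : 'I_(tx_d tx)) (v : tx_V tx i)
  | XNle (i : 'I_(tx_d tx)) (v : tx_V tx i)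
  | YLe  (i : 'I_(tx_d tx)) (v : tx_V tx i)
  | YNle (i : 'I_(tx_d tx)) (v : tx_V tx i).

Definition clause (tx : Taxonomies) := list (atom tx).      (* conjunction *)
Definition statement (tx : Taxonomies) := list (clause tx). (* disjunction *)
Definition formula (tx : Taxonomies) := list (statement tx). (* disjunction *)

Definition holds_le (tx : Taxonomies) (t : ttuple tx) i (v : tx_V tx i) : Prop :=
  match t i with Some a => tx_le tx i a v | None => False end.
Definition holds_nle (tx : Taxonomies) (t : ttuple tx) i (v : tx_V tx i) : Prop :=
  match t i with Some a => ~ tx_le tx i a v | None => False end.

Definition atom_sem (tx : Taxonomies) (a : atom tx) : relD (ttuple tx) :=
  fun x y =>
    match a with
    | XLe i v => holds_le x v
    | XNle i v => holds_nle x v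
    | YLe i v => holds_le y v
    | YNle i v => holds_nle y v
    end.

Definition clause_sem (tx : Taxonomies) (c : clause tx) : relD (ttuple tx) :=
  fun x y => forall a, In a c -> atom_sem a x y.

Definition statement_sem (tx : Taxonomies) (p : statement tx) : relD (ttuple tx) :=
  fun x y => exists c, In c p /\ clause_sem c x y.

Definition wf_formula (tx : Taxonomies) (F : formula tx) : Prop :=
  forall p c, In p F -> In c p -> exists x y, clause_sem c x y.

(* Formulas seen as (indexed) families of statements, each statement   *)
(* represented by the binary relation it defines on D.                 *)
Record sform (D : Type) := SForm {
  sf_idx : Type;
  sf_st : sf_idx -> relD D
}.

Definition induced (D : Type) (F : sform D) : relD D :=
  fun x y => exists i, @sf_st D F i x y.

Definition of_formula (tx : Taxonomies) (F : formula tx) : sform (ttuple tx) :=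
  @SForm _ 'I_(size F) (fun k => statement_sem (seq.nth nil F k)).

Definition incl (D : Type) (P Q : relD D) : Prop := forall x y, P x y -> Q x y.
Definition strict_incl (D : Type) (P Q : relD D) : Prop := incl P Q /\ ~ incl Q P.

(* Removal of contradictory (unsatisfiable) clauses
   does not change the relation defined by a statement, hence is implicit
   in the relational representation of statements. *)
Definition remove_subsumed (D : Type) (F : sform D) : sform D :=
  @SForm D {i : sf_idx F | ~ exists j, strict_incl (@sf_st D F i) (@sf_st D F j)}
           (fun i => @sf_st D F (proj1_sig i)).

(* Operator T: the statements of the result are the compositions
   P_{i1} o ... o P_{ik} (k >= 1) of statements of the input; the induced
   relation is the transitive closure of the input one. *)
Fixpoint compose_seq (D : Type) (I : Type) (st : I -> relD D) (s : list I) : relD D :=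
  match s with
  | nil => fun x y => x = y
  | i :: s' => fun x y => exists z, st i x z /\ compose_seq st s' z y
  end.

Definition opT (D : Type) (F : sform D) : sform D :=
  remove_subsumed
    (@SForm D {s : list (sf_idx F) | s <> nil}
              (fun s => compose_seq (@sf_st D F) (proj1_sig s))).

Definition Impl (D : Type) (I : Type) (st : I -> relD D) (i j : I) : Prop :=
  (forall t1 t2, st j t2 t1 -> st i t1 t2) /\
  ~ (forall t1 t2, st i t1 t2 -> st j t2 t1).

Definition S_round (D : Type) (I : Type) (st : I -> relD D) : I -> relD D :=
  fun i x y => st i x y /\ forall j, Impl st i j -> ~ st j y x.

(* Rounds are repeated until no Impl set is nonempty; since rounds only
   shrink statements and a round with all Impl sets empty is the identity,
   the final result is the statement-wise intersection over all rounds. *)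
Definition opS (D : Type) (F : sform D) : sform D :=
  remove_subsumed
    (@SForm D (sf_idx F)
       (fun i x y => forall n, iter n (@S_round D (sf_idx F)) (@sf_st D F) i x y)).

Inductive op := OpT | OpS.

Definition apply_ops (D : Type) (X : list op) (F : sform D) : sform D :=
  fold_left (fun G o => match o with OpT => opT G | OpS => opS G end) X F.

Definition pref (X : list op) (tx : Taxonomies) (F : formula tx) : relD (ttuple tx) :=
  induced (apply_ops X (of_formula F)).

Definition strict_part (D : Type) (R : relD D) : relD D :=
  fun x y => R x y /\ ~ R y x.

Definition transitive_rel (D : Type) (R : relD D) : Prop :=
  forall x y z, R x y -> R y z -> R x z.

Definition contained (X Y : list op) : Prop :=
  forall (tx : Taxonomies) (F : formula tx), wf_formula F ->
    incl (pref X F) (pref Y F).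

Definition equiv_seq (X Y : list op) : Prop := contained X Y /\ contained Y X.

Definition transitive_seq (X : list op) : Prop :=
  forall (tx : Taxonomies) (F : formula tx), wf_formula F ->
    transitive_rel (strict_part (pref X F)).

Definition minimal_seq (X : list op) : Prop :=
  ~ exists Y : list op, ~ equiv_seq Y X /\ contained Y X.

(* A single initial formula defeats every sequence.  Take one attribute whose
   taxonomy is the four-element antichain {0,1,2,3} and the three one-clause
   statements  x in {2,3} /\ y in {0,3},  x in {1,3} /\ y = 1  and
   x in {0,1} /\ y in {2,3}.  Every statement is then a relation on {0,..,3},
   and T (closure under composition) and S (the specificity rounds) act on
   finite families of such relations, so the families reachable from this
   formula can be computed.  Up to subsumed statements there are three: the
   initial family, its T-image, and the S-image of the latter.  For the first
   and the last the strict part of the induced relation is not transitive; for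
   the middle one a further S strictly shrinks the induced relation.  Since S
   never adds pairs, X S is then strictly contained in X, so X is not minimal. *)

From mathcomp Require Import all_boot zify.

Set Implicit Arguments.
Unset Strict Implicit.
Unset Printing Implicit Defensive.

Section DiscreteTaxonomy.

Variable n : nat.

(* A relation on {0,..,n-1}, stored row-major as its n * n boolean matrix. *)
Definition bmat := seq bool.
Definition dom : seq nat := iota 0 n.

Definition bget (r : bmat) (a b : nat) : bool := nth false r (a * n + b).
Definition bmk (f : nat -> nat -> bool) : bmat :=
  mkseq (fun k => f (k %/ n) (k %% n)) (n * n).

Definition bcomp (r s : bmat) : bmat :=
  bmk (fun a b => has (fun c => bget r a c && bget s c b) dom).
Definition btr (r : bmat) : bmat := bmk (fun a b => bget r b a).
Definition bstrict (r : bmat) : bmat := bmk (fun a b => bget r a b && ~~ bget r b a).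
Definition bunion (L : seq bmat) : bmat := bmk (fun a b => has (fun r => bget r a b) L).
Definition bsub (r s : bmat) : bool :=
  all (fun a => all (fun b => bget r a b ==> bget s a b) dom) dom.
Definition btransitive (r : bmat) : bool := bsub (bcomp r r) r.
Definition bnonempty (r : bmat) : bool := has (fun a => has (bget r a) dom) dom.

Lemma bget_mk f a b : a < n -> b < n -> bget (bmk f) a b = f a b.
Proof.
move=> ha hb; rewrite /bget /bmk nth_mkseq; last by nia.
by rewrite divnMDl ?modnMDl ?divn_small ?modn_small ?addn0 //; lia.
Qed.

Lemma mem_dom (a : 'I_n) : nat_of_ord a \in dom.
Proof. by rewrite mem_iota ltn_ord. Qed.

Lemma dom_ord c : c \in dom -> exists a : 'I_n, nat_of_ord a = c.
Proof. by rewrite mem_iota => /andP[_ hc]; exists (Ordinal hc). Qed.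

Definition discrete_tax : Taxonomies :=
  @Build_Taxonomies 1 (fun _ => 'I_n) (fun _ a b => a = b)
    (fun _ a => erefl a) (fun _ a b c h1 h2 => etrans h1 h2) (fun _ a b h _ => h).

Local Notation D := (ttuple discrete_tax).

Definition tuple1 (a : 'I_n) : D := fun _ => Some a.

(* Tuples lacking the attribute are related to nothing; this is faithful for the
   statements below, all of whose clauses have both an x-atom and a y-atom. *)
Definition denb (r : bmat) (x y : D) : bool :=
  if x ord0 is Some a then if y ord0 is Some b then bget r a b else false else false.
Definition den (r : bmat) : relD D := fun x y => denb r x y.

Definition eqrel (P Q : relD D) : Prop := forall x y, P x y <-> Q x y.

Lemma den_comp r s x y : (exists z, den r x z /\ den s z y) <-> den (bcomp r s) x y.
Proof.
rewrite /den /denb /bcomp.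
case: (x ord0) => [a|]; case: (y ord0) => [b|]; split => //; last 3 first.
  1-3: by case=> z []; case: (z ord0).
- case=> z []; case: (z ord0) => [c|] //= h1 h2; rewrite bget_mk ?ltn_ord //.
  by apply/hasP; exists (nat_of_ord c); rewrite ?mem_dom ?h1.
- rewrite bget_mk ?ltn_ord // => /hasP[c /dom_ord[c' <-] /andP[h1 h2]].
  by exists (tuple1 c'); rewrite /= h1.
Qed.

Lemma den_tr r x y : den (btr r) x y <-> den r y x.
Proof.
rewrite /den /denb /btr.
by case: (x ord0) => [a|]; case: (y ord0) => [b|] //; rewrite bget_mk ?ltn_ord.
Qed.

Lemma den_strict r : eqrel (strict_part (den r)) (den (bstrict r)).
Proof.
move=> x y; rewrite /strict_part /den /denb /bstrict.
case: (x ord0) => [a|]; last by split => // -[].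
case: (y ord0) => [b|]; last by split => // -[].
by rewrite bget_mk ?ltn_ord //; split => [[-> /negP]|/andP[-> /negP]].
Qed.

Lemma den_sub r s : incl (den r) (den s) <-> bsub r s.
Proof.
split => [H | /allP H x y].
- apply/allP => _ /dom_ord[a <-]; apply/allP => _ /dom_ord[b <-]; apply/implyP.
  exact: (H (tuple1 a) (tuple1 b)).
- rewrite /den /denb; case: (x ord0) => [a|] //; case: (y ord0) => [b|] //.
  exact/implyP/(allP (H _ (mem_dom a)))/mem_dom.
Qed.

Lemma incl_den P Q r s : eqrel P (den r) -> eqrel Q (den s) -> incl P Q <-> bsub r s.
Proof. by move=> HP HQ; rewrite -den_sub; split => H x y /HP/H/HQ. Qed.

Lemma den_transitive r : transitive_rel (den r) <-> btransitive r.
Proof.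
rewrite /btransitive -den_sub; split => H.
- by move=> x y /den_comp[z [hxz hzy]]; apply: H hzy.
- by move=> x y z hxy hyz; apply/H/den_comp; exists y.
Qed.

Definition bimpl (r s : bmat) : bool := bsub (btr s) r && ~~ bsub r (btr s).

Lemma Impl_den I (st : I -> relD D) i j r s :
  eqrel (st i) (den r) -> eqrel (st j) (den s) -> Impl st i j <-> bimpl r s.
Proof.
move=> Hi Hj.
have Hj' : eqrel (fun x y => st j y x) (den (btr s)) by move=> x y; rewrite den_tr.
have E1 := incl_den Hj' Hi; have E2 := incl_den Hi Hj'.
rewrite /bimpl; split => [[/E1 -> h] | /andP[/E1 h1 /negP h2]]; last by split => // /E2.
by apply/negP => /E2.
Qed.

(* T and S only see statements through the relations they define, so they can be
   computed on the matrices of L. *)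
Definition represents (L : seq bmat) (Z : sform D) : Prop :=
  (forall i : sf_idx Z, exists2 r, r \in L & eqrel (sf_st i) (den r)) /\
  (forall r, r \in L -> exists i : sf_idx Z, eqrel (sf_st i) (den r)).

Definition seteq (A B : seq bmat) : bool :=
  all (fun r => r \in B) A && all (fun r => r \in A) B.

Lemma represents_seteq L L' Z : represents L Z -> seteq L L' -> represents L' Z.
Proof.
case=> H1 H2 /andP[/allP sub1 /allP sub2]; split => [i | r /sub2 /H2 //].
by have [r /sub1 hr Hi] := H1 i; exists r.
Qed.

Lemma represents_ext L I (st st' : I -> relD D) :
  (forall i, eqrel (st i) (st' i)) -> represents L (SForm st) -> represents L (SForm st').
Proof.
move=> E [H1 H2]; split => [i | r /H2[i Hi]].
- by have [r hr Hi] := H1 i; exists r => // x y /=; rewrite -E; apply: Hi.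
- by exists i => x y /=; rewrite -E; apply: Hi.
Qed.

Lemma denb_union L x y : denb (bunion L) x y = has (fun r => denb r x y) L.
Proof.
rewrite /denb; case: (x ord0) => [a|]; last by elim: L.
by case: (y ord0) => [b|]; rewrite ?bget_mk ?ltn_ord //; elim: L.
Qed.

Lemma induced_represents L Z : represents L Z -> eqrel (induced Z) (den (bunion L)).
Proof.
case=> H1 H2 x y; rewrite /den denb_union; split.
- by case=> i /=; have [r hr /(_ x y) [Hi _]] := H1 i => /Hi h; apply/hasP; exists r.
- by case/hasP => r /H2[i Hi] /Hi h; exists i.
Qed.

Definition bmaximal (L : seq bmat) : seq bmat :=
  [seq r <- L | ~~ has (fun s => bsub r s && ~~ bsub s r) L].

Lemma represents_remove_subsumed L Z :
  represents L Z -> represents (bmaximal L) (remove_subsumed Z).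
Proof.
case=> H1 H2; split.
- case=> i maxi /=; have [r hr Hi] := H1 i; exists r => //.
  rewrite mem_filter hr andbT; apply/hasP => -[s /H2[j Hj] /andP[hrs hsr]].
  apply: maxi; exists j; split; first exact/(incl_den Hi Hj).
  by move/(incl_den Hj Hi); apply/negP.
- move=> r; rewrite mem_filter => /andP[/hasPn maxr /H2[i Hi]].
  suff maxi : ~ exists j : sf_idx Z, strict_incl (sf_st i) (sf_st j).
    by exists (exist _ i maxi).
  case=> j [hij hji]; have [s hs Hj] := H1 j.
  apply/hji/(incl_den Hj Hi)/(contraNT _ (maxr s hs)) => hsr.
  by rewrite hsr andbT; apply/(incl_den Hi Hj).
Qed.

Definition compose_step (L C : seq bmat) : seq bmat :=
  undup (C ++ [seq bcomp r c | r <- L, c <- C]).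
Definition bcompositions (L : seq bmat) (k : nat) : seq bmat := iter k (compose_step L) L.
Definition comp_closed (L C : seq bmat) : bool :=
  all (fun r => all (fun c => bcomp r c \in C) C) L.
Definition bopT (k : nat) (L : seq bmat) : seq bmat := bmaximal (bcompositions L k).

Lemma mem_bcompositions L k r : r \in L -> r \in bcompositions L k.
Proof.
move=> hr; elim: k => // k IH.
by rewrite /bcompositions iterS -/(bcompositions L _) mem_undup mem_cat IH.
Qed.

Lemma compose_seq1 I (st : I -> relD D) i : eqrel (compose_seq st [:: i]) (st i).
Proof. by move=> x y; split => [[z [h <-]] | h]; last exists y. Qed.

Lemma compose_seq_cons I (st : I -> relD D) i s r c :
  eqrel (st i) (den r) -> eqrel (compose_seq st s) (den c) ->
  eqrel (compose_seq st (i :: s)) (den (bcomp r c)).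
Proof.
move=> Hi Hs x y; rewrite -den_comp.
by split => -[z [h1 h2]]; exists z; split; (apply/Hi || apply/Hs).
Qed.

Lemma represents_opT L Z k : represents L Z -> comp_closed L (bcompositions L k) ->
  represents (bopT k L) (opT Z).
Proof.
move=> [H1 H2] /allP closedC; apply: represents_remove_subsumed; split.
- case=> -[//|i s] _ /=; elim: s i => [|j s IH] i.
    have [r hr Hi] := H1 i; exists r; first exact: mem_bcompositions.
    by move=> x y; apply: iff_trans (compose_seq1 _ i x y) (Hi x y).
  have [c hc Hs] := IH j; have [r hr Hi] := H1 i.
  exists (bcomp r c); first exact: (allP (closedC r hr)).
  exact: (compose_seq_cons (s := j :: s) Hi Hs).
- suff Hcomp m c : c \in bcompositions L m ->
      exists s : {s : seq (sf_idx Z) | s <> [::]},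
        eqrel (compose_seq (@sf_st _ Z) (sval s)) (den c).
    by move=> c /Hcomp.
  elim: m c => [|m IH] c.
    move=> /H2[i Hi]; have ne : [:: i] <> [::] by [].
    exists (exist (fun s => s <> [::]) _ ne) => x y.
    exact: iff_trans (compose_seq1 _ i x y) (Hi x y).
  rewrite /bcompositions iterS -/(bcompositions L _) mem_undup mem_cat.
  case/orP => [/IH // | /allpairsP[[r c'] /= [hr hc' ->]]].
  have [[s ?] Hs] := IH c' hc'; have [i Hi] := H2 r hr; have ne : i :: s <> [::] by [].
  by exists (exist (fun s => s <> [::]) _ ne); apply: compose_seq_cons.
Qed.

Definition bround (L : seq bmat) (r : bmat) : bmat :=
  bmk (fun a b => bget r a b && all (fun s => bimpl r s ==> ~~ bget s b a) L).
Definition brounds (L : seq bmat) : seq bmat := map (bround L) L.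
Definition rounds_stable (L : seq bmat) : bool := all (fun r => bround L r == r) L.
Definition bopS (k : nat) (L : seq bmat) : seq bmat := bmaximal (iter k brounds L).

Lemma denb_round L r x y :
  denb (bround L r) x y = denb r x y && all (fun s => bimpl r s ==> ~~ denb s y x) L.
Proof.
rewrite /denb; case: (x ord0) => [a|] //; case: (y ord0) => [b|] //.
by rewrite bget_mk ?ltn_ord.
Qed.

Lemma den_round I (st : I -> relD D) L i r :
  represents L (SForm st) -> eqrel (st i) (den r) -> eqrel (S_round st i) (den (bround L r)).
Proof.
move=> [H1 H2] Hi x y; rewrite /S_round /den denb_round; split.
- case=> /Hi -> /= maxi; apply/allP => s /H2[j Hj]; apply/implyP.
  by move/(Impl_den Hi Hj)/maxi => h; apply/negP => /Hj.
- case/andP => /Hi hxy /allP maxi; split => // j; have [s hs Hj] := H1 j.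
  by move/(Impl_den Hi Hj)/(implyP (maxi s hs))/negP => h /Hj.
Qed.

Lemma represents_round I (st : I -> relD D) L :
  represents L (SForm st) -> represents (brounds L) (SForm (S_round st)).
Proof.
move=> HL; case: (HL) => H1 H2; split => [i | _ /mapP[r /H2[i Hi] ->]].
- by have [r hr Hi] := H1 i; exists (bround L r); [exact: map_f | exact: den_round].
- by exists i; apply: den_round.
Qed.

Lemma represents_iter_round I (st : I -> relD D) L m :
  represents L (SForm st) -> represents (iter m brounds L) (SForm (iter m (@S_round D I) st)).
Proof. by move=> HL; elim: m => // m IH; rewrite !iterS; apply: represents_round. Qed.

Lemma iter_S_round_decr I (st : I -> relD D) m m' i x y :
  m <= m' -> iter m' (@S_round D I) st i x y -> iter m (@S_round D I) st i x y.
Proof.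
by move=> /subnK <-; elim: (m' - m) => // k IH; rewrite addSn iterS => -[/IH].
Qed.

Lemma brounds_stable L : rounds_stable L -> brounds L = L.
Proof. by move=> /allP stable; rewrite -[RHS]map_id; apply/eq_in_map => r /stable/eqP. Qed.

Lemma iter_S_round_stable I (st : I -> relD D) L m :
  represents L (SForm st) -> rounds_stable L ->
  forall i, eqrel (iter m (@S_round D I) st i) (st i).
Proof.
move=> HL stable; elim: m => // m IH i x y.
have HLm : represents L (SForm (iter m (@S_round D I) st)).
  by rewrite -(iter_fix m (brounds_stable stable)); apply: represents_iter_round.
have [r hr Hi] := HLm.1 i.
apply: iff_trans (den_round HLm Hi x y) _; rewrite (eqP (allP stable r hr)).
exact: iff_trans (iff_sym (Hi x y)) (IH i x y).
Qed.

Lemma represents_opS L Z k : represents L Z -> rounds_stable (iter k brounds L) ->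
  represents (bopS k L) (opS Z).
Proof.
move=> HL stable; apply: represents_remove_subsumed.
have HLk := represents_iter_round k (HL : represents L (SForm (@sf_st _ Z))).
apply: represents_ext (HLk) => i x y /=; split => [h m | /(_ k) //].
case: (leqP m k) => [hmk | /ltnW/subnK <-]; first exact: iter_S_round_decr hmk h.
by rewrite iterD; apply/(iter_S_round_stable (m - k) HLk stable).
Qed.

Definition oval (o : option 'I_n) : option nat := omap (@nat_of_ord n) o.

Definition atom_holds (ox oy : option nat) (t : atom discrete_tax) : bool :=
  match t with
  | XLe _ v => if ox is Some a then a == nat_of_ord v else false
  | XNle _ v => if ox is Some a then a != nat_of_ord v else false
  | YLe _ v => if oy is Some b then b == nat_of_ord v else false
  | YNle _ v => if oy is Some b then b != nat_of_ord v else false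
  end.

Lemma atom_semE (t : atom discrete_tax) (x y : D) :
  atom_sem t x y <-> atom_holds (oval (x ord0)) (oval (y ord0)) t.
Proof.
case: t => i v; rewrite /= /holds_le /holds_nle (ord1 i) /=.
- by case: (x ord0) => [a|] //=; rewrite (rwP val_eqP).
- by case: (x ord0) => [a|] //=; rewrite (rwP val_eqP) (rwP negP).
- by case: (y ord0) => [b|] //=; rewrite (rwP val_eqP).
- by case: (y ord0) => [b|] //=; rewrite (rwP val_eqP) (rwP negP).
Qed.

Lemma clause_semE (c : clause discrete_tax) (x y : D) :
  clause_sem c x y <-> all (atom_holds (oval (x ord0)) (oval (y ord0))) c.
Proof.
rewrite /clause_sem; elim: c => [|t c IH] /=; first by split => // _ t [].
split => [H | /andP[/atom_semE ht /IH hc] t' [<- // | /hc //]].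
by apply/andP; split; [apply/atom_semE/H; left | apply/IH => t' ht'; apply: H; right].
Qed.

Definition is_x_atom (t : atom discrete_tax) : bool :=
  if t is (XLe _ _ | XNle _ _) then true else false.
Definition two_sided (c : clause discrete_tax) : bool :=
  has is_x_atom c && ~~ all is_x_atom c.
Definition clause_mat (c : clause discrete_tax) : bmat :=
  bmk (fun a b => all (atom_holds (Some a) (Some b)) c).

Lemma atom_holds_undef_x c oy : has is_x_atom c -> all (atom_holds None oy) c = false.
Proof. by elim: c => //= -[] i v c IH //= /IH ->; rewrite andbF. Qed.

Lemma atom_holds_undef_y c ox : ~~ all is_x_atom c -> all (atom_holds ox None) c = false.
Proof. by elim: c => //= -[] i v c IH //= /IH ->; rewrite andbF. Qed.

Lemma den_clause_mat c : two_sided c -> eqrel (clause_sem c) (den (clause_mat c)).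
Proof.
move=> /andP[hx hy] x y; rewrite clause_semE /den /denb.
case: (x ord0) => [a|] /=; last by rewrite atom_holds_undef_x.
case: (y ord0) => [b|] /=; last by rewrite atom_holds_undef_y.
by rewrite bget_mk ?ltn_ord.
Qed.

Definition simple_formula (F : formula discrete_tax) : bool :=
  all (fun p => if p is [:: c] then two_sided c && bnonempty (clause_mat c) else false) F.
Definition formula_mats (F : formula discrete_tax) : seq bmat :=
  [seq clause_mat (head [::] p) | p <- F].

Lemma statement_sem1 (c : clause discrete_tax) : eqrel (statement_sem [:: c]) (clause_sem c).
Proof. by move=> x y; split => [[_ [[<-|[]] //]] | h]; exists c; split; first left. Qed.

Lemma den_statement F (i : 'I_(size F)) : simple_formula F ->
  eqrel (statement_sem (nth [::] F i)) (den (clause_mat (head [::] (nth [::] F i)))).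
Proof.
move=> /(all_nthP [::])/(_ i (ltn_ord i)).
case: (nth [::] F i) => [|c [|]] //= /andP[hc _] x y.
exact: iff_trans (statement_sem1 c x y) (den_clause_mat hc x y).
Qed.

Lemma represents_of_formula F : simple_formula F -> represents (formula_mats F) (of_formula F).
Proof.
move=> simF; split => [i | r].
- exists (clause_mat (head [::] (nth [::] F i))); last exact: den_statement.
  by rewrite -(nth_map [::] (clause_mat [::]) (fun p => clause_mat (head [::] p)))
    ?mem_nth ?size_map.
- case/(nthP (clause_mat [::])) => k; rewrite size_map => hk <-.
  by exists (Ordinal hk); rewrite (nth_map [::]) //; apply: den_statement.
Qed.

Lemma bnonempty_den r : bnonempty r -> exists x y, den r x y.
Proof.
by case/hasP => _ /dom_ord[a <-] /hasP[_ /dom_ord[b <-] h]; exists (tuple1 a), (tuple1 b).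
Qed.

Lemma wf_simple_formula F : simple_formula F -> wf_formula F.
Proof.
elim: F => [_ p c [] | p F IH /andP[hp /IH hF] p' c [<- | hp']]; last exact: hF hp'.
case: p hp => [|c0 [|]] //= /andP[hc /bnonempty_den[x [y h]]] [<- | []].
by exists x, y; apply/(den_clause_mat hc).
Qed.

(* kT bounds the length of compositions, kS the number of rounds; the check
   includes that these suffice (closure under composition, stable rounds). *)
Definition bops_closed (kT kS : nat) (reachable : seq (seq bmat)) : bool :=
  all (fun L => [&& comp_closed L (bcompositions L kT), rounds_stable (iter kS brounds L),
                    has (seteq (bopT kT L)) reachable & has (seteq (bopS kS L)) reachable])
      reachable.

Lemma represents_apply_ops kT kS reachable X L Z :
  bops_closed kT kS reachable -> L \in reachable -> represents L Z ->
  exists2 L', L' \in reachable & represents L' (apply_ops X Z).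
Proof.
move=> /allP closed; elim: X L Z => [|o X IH] L Z hL HL; first by exists L.
have /and4P[hT hS /hasP[LT hLT eqT] /hasP[LS hLS eqS]] := closed L hL.
case: o => /=; [apply: (IH LT) | apply: (IH LS)] => //.
- exact: represents_seteq (represents_opT HL hT) eqT.
- exact: represents_seteq (represents_opS HL hS) eqS.
Qed.

Lemma eqrel_strict_part P Q : eqrel P Q -> eqrel (strict_part P) (strict_part Q).
Proof. by move=> E x y; rewrite /strict_part !E. Qed.

Lemma represents_not_transitive L Z : represents L Z ->
  ~~ btransitive (bstrict (bunion L)) -> ~ transitive_rel (strict_part (induced Z)).
Proof.
move=> HL /negP ntrans Ztrans; apply/ntrans/den_transitive => x y z.
have E x' y' := iff_trans (iff_sym (den_strict _ x' y'))
                  (iff_sym (eqrel_strict_part (induced_represents HL) x' y')).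
by move=> /E hxy /E hyz; apply/E/(Ztrans _ _ _ hxy hyz).
Qed.

Lemma opS_shrinks kS L Z : represents L Z -> rounds_stable (iter kS brounds L) ->
  ~~ bsub (bunion L) (bunion (bopS kS L)) -> ~ incl (induced Z) (induced (opS Z)).
Proof.
move=> HL hS /negP nsub.
by move/(incl_den (induced_represents HL) (induced_represents (represents_opS HL hS))).
Qed.

End DiscreteTaxonomy.

Lemma apply_ops_rcons (E : Type) X o (Z : sform E) :
  apply_ops (X ++ [:: o]) Z =
  match o with OpT => opT (apply_ops X Z) | OpS => opS (apply_ops X Z) end.
Proof. by rewrite /apply_ops; elim: X Z => [|o' X IH] Z //=. Qed.

Lemma contained_rcons_S X : contained (X ++ [:: OpS]) X.
Proof.
by move=> tx F _ x y; rewrite /pref apply_ops_rcons => -[[i _] /= /(_ 0)]; exists i.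
Qed.

Definition tax4 := discrete_tax 4.
(* k mod 4, unlike inord k computable by vm_compute *)
Definition ord4 (k : nat) : 'I_4 := Ordinal (ltn_pmod k (isT : 0 < 4)).
Definition xnot (k : nat) : atom tax4 := @XNle tax4 ord0 (ord4 k).
Definition yis (k : nat) : atom tax4 := @YLe tax4 ord0 (ord4 k).
Definition ynot (k : nat) : atom tax4 := @YNle tax4 ord0 (ord4 k).

Definition F0 : formula tax4 :=
  [:: [:: [:: xnot 0; xnot 1; ynot 1; ynot 2]];
      [:: [:: xnot 0; xnot 2; yis 1]];
      [:: [:: xnot 2; xnot 3; ynot 0; ynot 1]]].

Definition L0 : seq bmat := formula_mats F0.
Definition LT : seq bmat := bopT 4 4 L0.
Definition LTS : seq bmat := bopS 4 3 LT.
Definition reachable : seq (seq bmat) := [:: L0; LT; LTS].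

Lemma F0_simple : simple_formula F0. Proof. by vm_compute. Qed.

Lemma reachable_closed : bops_closed 4 4 3 reachable. Proof. by vm_compute. Qed.

Lemma reachable_defective :
  all (fun L => ~~ btransitive 4 (bstrict 4 (bunion 4 L))
                || ~~ bsub 4 (bunion 4 L) (bunion 4 (bopS 4 3 L))) reachable.
Proof. by vm_compute. Qed.

Theorem mainTheorem9 : forall X : list op, ~ (transitive_seq X /\ minimal_seq X).
Proof.
move=> X [Xtrans Xmin].
have wfF0 := wf_simple_formula F0_simple.
have [L hL HL] := represents_apply_ops X reachable_closed (mem_head L0 _)
                    (represents_of_formula F0_simple).
have /and4P[_ hS _ _] := allP reachable_closed L hL.
case/orP: (allP reachable_defective L hL) => [ntrans | shrinks].
- exact: represents_not_transitive HL ntrans (Xtrans _ _ wfF0).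
- apply: Xmin; exists (X ++ [:: OpS]); split; last exact: contained_rcons_S.
  case=> _ /(_ _ _ wfF0); rewrite /pref apply_ops_rcons.
  exact: opS_shrinks HL hS shrinks.
Qed.
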